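(* Let $x=\sum_{n\in F}\alpha_ne_n$ be an extreme point of $B_J$ and let $\{I_n\}_{n\in F}$ be a family of intervals of $\mathbb N$. If $\bigcup_{n\in\mathrm{supp}(x)}I_n$ is not an interval of $\mathbb N$, then $x^*=\sum_{n\in F}\alpha_nI_n^*$ is not an extreme point of $B_{J^*}$.
   Context: For a real sequence $x=(x(n))_{n\in\mathbb N}$ let $\|x\|_J=\sup\bigl(\sum_{i=1}^n|\sum_{k\in I_i}x(k)|^2\bigr)^{1/2}$ over all $n$ and all families of pairwise disjoint intervals $I_1,\dots,I_n$ of $\mathbb N$ (intervals: nonempty sets of consecutive positive integers, possibly infinite). $J=\{x:\|x\|_J<\infty\}$ with unit vector basis $(e_n)$ and closed unit ball $B_J$; $J^*$ is its dual with closed unit ball $B_{J^*}$. $\mathrm{supp}(x)=\{n:x(n)\ne0\}$. For an interval $I$, $I^*\in J^*$ is $I^*(x)=\sum_{n\in I}x(n)$. A family of intervals $\{I_i\}_{i\in F}$: $F=\{1,\dots,k\}$ or $F=\mathbb N$, each $I_i$ an interval, $\max I_i<\min I_{i+1}$ whenever $i+1\in F$; $\sum_{i\in F}\alpha_iI_i^*$ denotes the functional $x\mapsto\sum_{i\in F}\alpha_iI_i^*(x)$ (here $\sum\alpha_i^2=1$, so this is a functional of norm at most $1$). *)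

From Stdlib Require Import Reals Lra List.
From Coquelicot Require Import Coquelicot.
Open Scope R_scope.

(* Convention: the positive integers 1,2,3,... are represented by the Rocq
   naturals 0,1,2,... (index shift by one).  Sequences are maps nat -> R. *)

(* An interval of N: a nonempty set of consecutive integers, either
   [lo, b] (hi = Some b, lo <= b) or [lo, +oo) (hi = None). *)
Record interval := mkInterval {
  lo : nat;
  hi : option nat;
  hi_ok : forall b, hi = Some b -> (lo <= b)%nat }.

Definition inI (I : interval) (k : nat) : Prop :=
  (lo I <= k)%nat /\ (forall b, hi I = Some b -> (k <= b)%nat).

Definition Isum (I : interval) (y : nat -> R) : R :=
  match hi I with
  | Some b => sum_n_m y (lo I) b
  | None => Series (fun k => y (lo I + k)%nat)
  end.

Definition pairwise_disjoint (l : list interval) : Prop :=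
  forall i j, (i < length l)%nat -> (j < length l)%nat -> i <> j ->
    forall d k, inI (nth i l d) k -> ~ inI (nth j l d) k.

Definition sq_sum (l : list interval) (y : nat -> R) : R :=
  fold_right (fun I acc => (Isum I y) ^ 2 + acc) 0 l.

(* y in J: all interval sums exist (equivalently the series sum y converges)
   and ||y||_J < oo. *)
Definition inJ (y : nat -> R) : Prop :=
  ex_series y /\
  exists M : R, forall l, pairwise_disjoint l -> sq_sum l y <= M.

Definition in_BJ (y : nat -> R) : Prop :=
  ex_series y /\
  forall l, pairwise_disjoint l -> sq_sum l y <= 1.

Definition extreme_BJ (x : nat -> R) : Prop :=
  in_BJ x /\
  forall (y z : nat -> R) (t : R), in_BJ y -> in_BJ z -> 0 < t < 1 ->
    (forall n, x n = t * y n + (1 - t) * z n) -> y = z.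

(* Elements of J^*: functionals, only their values on J matter. *)
Definition linear_on_J (f : (nat -> R) -> R) : Prop :=
  forall (a b : R) (y z : nat -> R), inJ y -> inJ z ->
    f (fun n => a * y n + b * z n) = a * f y + b * f z.

Definition in_BJdual (f : (nat -> R) -> R) : Prop :=
  linear_on_J f /\ forall y, in_BJ y -> Rabs (f y) <= 1.

Definition extreme_BJdual (f : (nat -> R) -> R) : Prop :=
  in_BJdual f /\
  forall (g h : (nat -> R) -> R) (t : R), in_BJdual g -> in_BJdual h ->
    0 < t < 1 -> (forall y, inJ y -> f y = t * g y + (1 - t) * h y) ->
    forall y, inJ y -> g y = h y.

(* Index sets F = {1,...,k} (Some k, k >= 1) or F = N (None);
   shifted: {0,...,k-1} or all of nat. *)
Definition inF (F : option nat) (n : nat) : Prop :=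
  match F with None => True | Some k => (n < k)%nat end.

Definition inFb (F : option nat) (n : nat) : bool :=
  match F with None => true | Some k => Nat.ltb n k end.

Definition index_set_ok (F : option nat) : Prop :=
  match F with None => True | Some k => (1 <= k)%nat end.

Definition before (I J : interval) : Prop :=
  match hi I with Some b => (b < lo J)%nat | None => False end.

Definition interval_family (F : option nat) (Ifam : nat -> interval) : Prop :=
  forall n, inF F n -> inF F (S n) -> before (Ifam n) (Ifam (S n)).

Definition xseq (F : option nat) (alpha : nat -> R) : nat -> R :=
  fun n => if inFb F n then alpha n else 0.

Definition xstar (F : option nat) (alpha : nat -> R) (Ifam : nat -> interval)
  : (nat -> R) -> R :=
  fun y => Series (fun n => if inFb F n then alpha n * Isum (Ifam n) y else 0).

Definition supp (x : nat -> R) (n : nat) : Prop := x n <> 0.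

Definition is_interval (U : nat -> Prop) : Prop :=
  (exists k, U k) /\
  forall a b c, U a -> U b -> (a <= c)%nat -> (c <= b)%nat -> U c.

Definition supp_union (x : nat -> R) (Ifam : nat -> interval) (k : nat) : Prop :=
  exists n, supp x n /\ inI (Ifam n) k.

From Stdlib Require Import Reals Lra Lia List Classical Wf_nat.
From Coquelicot Require Import Coquelicot.
Open Scope R_scope.

(* Since ||x||_2 = 1 and ||x||_J <= 1, consecutive nonzero coordinates x_n, x_m
   of x have opposite signs: merging them into the block [n, m] would otherwise
   push the J-norm above 1.  A gap in the union of the I_n (n in supp x) yields
   such consecutive n < m with a nonempty interval G strictly between I_n and
   I_m.  Enlarging I_n to the right by G, or I_m to the left by G, keeps the
   supported intervals disjoint, so both x^* + x_n G^* and x^* + x_m G^* lie in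
   B_{J^*}, by |sum b_j K_j^*(y)| <= (sum b_j^2 + sum K_j^*(y)^2) / 2 <= 1.
   As x_n x_m < 0, x^* is a proper convex combination of the two, and they
   differ at the unit vector e_c for any c in G. *)

Lemma sum_n_m_linear (a b : R) (y z : nat -> R) s t :
  sum_n_m (fun k => a * y k + b * z k) s t = a * sum_n_m y s t + b * sum_n_m z s t.
Proof.
  rewrite (sum_n_m_ext _ (fun k => plus (mult a (y k)) (mult b (z k)))) by reflexivity.
  rewrite (sum_n_m_plus (G:=R_AbelianMonoid)).
  rewrite !(sum_n_m_mult_l (K:=R_Ring)). reflexivity.
Qed.

Lemma sum_n_shift (y : nat -> R) s j : sum_n (fun k => y (s + k)%nat) j = sum_n_m y s (s + j).
Proof.
  induction j as [|j IH].
  - rewrite sum_O, Nat.add_0_r, sum_n_n. reflexivity.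
  - rewrite sum_Sn, IH. replace (s + S j)%nat with (S (s + j)) by lia.
    rewrite sum_n_Sm by lia. reflexivity.
Qed.

Lemma sum_n_m_endpoints a n m : (n < m)%nat -> (forall j, (n < j < m)%nat -> a j = 0) ->
  sum_n_m a n m = a n + a m.
Proof.
  intros Hnm Hz. rewrite sum_Sn_m by lia. change (plus ?x ?y) with (x + y).
  destruct m as [|m]; [lia|].
  rewrite sum_n_Sm by lia. change (plus ?x ?y) with (x + y).
  assert (Hmid : sum_n_m a (S n) m = 0).
  { rewrite (sum_n_m_ext_loc a (fun _ => zero)) by (intros; apply Hz; lia).
    apply (sum_n_m_const_zero (G:=R_AbelianMonoid)). }
  rewrite Hmid. lra.
Qed.

Lemma partial_sum_le_series (a : nat -> R) l N :
  is_series a l -> (forall j, 0 <= a j) -> sum_n a N <= l.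
Proof.
  intros Ha Hpos.
  assert (Hmono : forall n, sum_n a N <= sum_n a (n + N)).
  { induction n as [|n IH]; [simpl; lra|]. simpl. rewrite sum_Sn.
    change (plus ?x ?y) with (x + y). specialize (Hpos (S (n + N))). lra. }
  exact (is_lim_seq_le (fun _ => sum_n a N) _ (sum_n a N) l Hmono
           (is_lim_seq_const _) (proj1 (is_lim_seq_incr_n (sum_n a) N l) Ha)).
Qed.

Lemma series_le_of_partial_sums_le (a : nat -> R) l C :
  is_series a l -> (forall N, sum_n a N <= C) -> l <= C.
Proof.
  intros Ha HC. exact (is_lim_seq_le (sum_n a) (fun _ => C) l C HC Ha (is_lim_seq_const C)).
Qed.

Lemma ex_series_of_bounded_partial_sums (a : nat -> R) M :
  (forall n, 0 <= a n) -> (forall N, sum_n a N <= M) -> ex_series a.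
Proof.
  intros Hpos HM.
  destruct (ex_finite_lim_seq_incr (sum_n a) M) as [l Hl]; auto.
  - intros n. rewrite sum_Sn. change (plus ?x ?y) with (x + y). specialize (Hpos (S n)). lra.
  - exists l. exact Hl.
Qed.

Definition delta (d : nat) (c : R) : nat -> R := fun k => if Nat.eq_dec k d then c else 0.

Lemma sum_n_delta d c N : sum_n (delta d c) N = if (d <=? N)%nat then c else 0.
Proof.
  induction N as [|N IH].
  - rewrite sum_O. unfold delta. destruct d; reflexivity.
  - rewrite sum_Sn, IH. change (plus ?x ?y) with (x + y). unfold delta.
    destruct (Nat.eq_dec (S N) d); destruct (Nat.leb_spec d N);
      destruct (Nat.leb_spec d (S N)); try lia; lra.
Qed.

Lemma sum_n_m_delta d c a b : (a <= S b)%nat ->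
  sum_n_m (delta d c) a b = if andb (a <=? d)%nat (d <=? b)%nat then c else 0.
Proof.
  intros Hab. destruct a as [|a].
  - exact (sum_n_delta d c b).
  - rewrite (sum_n_m_sum_n (G:=R_AbelianGroup)) by lia. change (minus ?x ?y) with (x - y).
    rewrite !sum_n_delta.
    destruct (Nat.leb_spec d b); destruct (Nat.leb_spec d a); destruct (Nat.leb_spec (S a) d);
      simpl; try lia; lra.
Qed.

Lemma is_series_delta d c : is_series (delta d c) c.
Proof.
  change (is_lim_seq (sum_n (delta d c)) c).
  apply is_lim_seq_ext_loc with (fun _ => c); [|apply is_lim_seq_const].
  exists d; intros n Hn. rewrite sum_n_delta. destruct (Nat.leb_spec d n); [reflexivity|lia].
Qed.

Lemma Series_plus_delta a d c : ex_series a ->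
  Series (fun j => a j + delta d c j) = Series a + c.
Proof.
  intros Ha. rewrite Series_plus; auto.
  - rewrite (is_series_unique _ _ (is_series_delta d c)). reflexivity.
  - exists c; apply is_series_delta.
Qed.

Lemma exists_nonzero_of_is_series_sq x : is_series (fun j => x j ^ 2) 1 -> exists j, x j <> 0.
Proof.
  intros Hser. apply NNPP; intros Hzero.
  assert (Hsq : forall j, x j ^ 2 = delta 0 0 j).
  { intros j. unfold delta. destruct (Nat.eq_dec j 0); destruct (Req_EM_T (x j) 0) as [E|E];
      try (rewrite E; ring); exfalso; eauto. }
  apply (is_series_ext _ _ _ Hsq) in Hser.
  pose proof (is_series_unique _ _ (is_series_delta 0 0)) as H0.
  rewrite (is_series_unique _ _ Hser) in H0. lra.
Qed.

Definition disjoint (I J : interval) : Prop := forall k, inI I k -> ~ inI J k.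

Lemma disjoint_sym I J : disjoint I J -> disjoint J I.
Proof. intros H k HJ HI. exact (H k HI HJ). Qed.

Lemma before_hi I J : before I J -> exists b, hi I = Some b /\ (b < lo J)%nat.
Proof. unfold before. destruct (hi I) as [b|]; [eauto|contradiction]. Qed.

Lemma before_lt_lo I J k : before I J -> inI I k -> (k < lo J)%nat.
Proof.
  intros HIJ [_ Hk]. destruct (before_hi I J HIJ) as [b [Hb Hlt]].
  specialize (Hk b Hb). lia.
Qed.

Lemma before_lo_lt I J : before I J -> (lo I < lo J)%nat.
Proof.
  intros HIJ. destruct (before_hi I J HIJ) as [b [Hb Hlt]]. pose proof (hi_ok I b Hb). lia.
Qed.

Lemma before_trans I J K : before I J -> before J K -> before I K.
Proof.
  intros HIJ HJK. destruct (before_hi I J HIJ) as [b [Hb Hlt]].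
  pose proof (before_lo_lt J K HJK). unfold before. rewrite Hb. lia.
Qed.

Lemma before_disjoint I J : before I J -> disjoint I J.
Proof. intros HIJ k Hk [HJ _]. pose proof (before_lt_lo I J k HIJ Hk). lia. Qed.

Lemma inI_lo I : inI I (lo I).
Proof. split; [lia|apply hi_ok]. Qed.

Lemma inI_between I c k : (lo I <= c <= k)%nat -> inI I k -> inI I c.
Proof. intros Hc [_ Hk]. split; [lia|]. intros b Hb. specialize (Hk b Hb). lia. Qed.

Lemma Isum_hi I b y : hi I = Some b -> Isum I y = sum_n_m y (lo I) b.
Proof. intros Hb. unfold Isum. rewrite Hb. reflexivity. Qed.

(* [a, b], which is [a, a] when b < a. *)
Definition fin_interval (a b : nat) : interval.
Proof. refine (mkInterval a (Some (Nat.max a b)) _). intros c H; injection H; lia. Defined.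

Lemma inI_fin_interval a b k : (a <= b)%nat -> inI (fin_interval a b) k <-> (a <= k <= b)%nat.
Proof.
  intros Hab. unfold inI, fin_interval; cbn [hi lo]. split.
  - intros [H1 H2]. specialize (H2 _ eq_refl). lia.
  - intros Hk. split; [lia|]. intros c E; injection E; lia.
Qed.

Lemma Isum_fin_interval a b y : (a <= b)%nat -> Isum (fin_interval a b) y = sum_n_m y a b.
Proof.
  intros Hab. unfold Isum, fin_interval; cbn [hi lo]. rewrite Nat.max_r by lia. reflexivity.
Qed.

Lemma linear_on_J_Isum_fin_interval a b : linear_on_J (Isum (fin_interval a b)).
Proof. intros c d y z _ _. unfold Isum; cbn [hi lo]. apply sum_n_m_linear. Qed.

Lemma Isum_fin_interval_split I b L y : hi I = Some b -> (b < L)%nat ->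
  Isum (fin_interval (lo I) L) y = Isum I y + Isum (fin_interval (S b) L) y.
Proof.
  intros Hb HbL. pose proof (hi_ok I b Hb).
  rewrite (Isum_hi I b y Hb), !Isum_fin_interval by lia.
  exact (sum_n_m_Chasles y (lo I) b L ltac:(lia) ltac:(lia)).
Qed.

Definition extend_left (s : nat) (I : interval) : interval :=
  mkInterval (Nat.min s (lo I)) (hi I)
    (fun b Hb => Nat.le_trans _ _ _ (Nat.le_min_r s (lo I)) (hi_ok I b Hb)).

Lemma Isum_extend_left s I (y : nat -> R) : (s < lo I)%nat -> ex_series y ->
  Isum (extend_left s I) y = sum_n_m y s (lo I - 1) + Isum I y.
Proof.
  intros Hs Hy. unfold Isum, extend_left; cbn [hi lo]. rewrite Nat.min_l by lia.
  destruct (hi I) as [b|] eqn:Hb.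
  - pose proof (hi_ok I b Hb).
    rewrite (sum_n_m_Chasles y s (lo I - 1) b) by lia.
    replace (S (lo I - 1)) with (lo I) by lia. reflexivity.
  - pose proof (proj1 (ex_series_incr_n y s) Hy) as Hys.
    rewrite (Series_incr_n _ (lo I - s)) by (auto; lia).
    rewrite <- sum_n_Reals, sum_n_shift.
    replace (s + Init.Nat.pred (lo I - s))%nat with (lo I - 1)%nat by lia.
    f_equal. apply Series_ext. intros k. f_equal. lia.
Qed.

Definition update (K : nat -> interval) (i : nat) (J : interval) : nat -> interval :=
  fun j => if Nat.eq_dec j i then J else K j.

(** * The J-norm against disjoint families *)

Lemma pairwise_disjoint_cons I l :
  (forall J, In J l -> disjoint I J) -> pairwise_disjoint l -> pairwise_disjoint (I :: l).
Proof.
  intros HI Hl i j Hi Hj Hij d k Hk Hk'.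
  destruct i as [|i], j as [|j]; simpl in *.
  - lia.
  - exact (HI (nth j l d) ltac:(apply nth_In; lia) k Hk Hk').
  - exact (HI (nth i l d) ltac:(apply nth_In; lia) k Hk' Hk).
  - exact (Hl i j ltac:(lia) ltac:(lia) ltac:(lia) d k Hk Hk').
Qed.

Lemma pairwise_disjoint_cons_inv I l : pairwise_disjoint (I :: l) ->
  pairwise_disjoint l /\ (forall J, In J l -> disjoint I J).
Proof.
  intros H; split.
  - intros i j Hi Hj Hij d k.
    exact (H (S i) (S j) ltac:(simpl; lia) ltac:(simpl; lia) ltac:(lia) d k).
  - intros J HJ k Hk Hk'. destruct (In_nth l J I HJ) as [j [Hj Hn]].
    apply (H 0%nat (S j) ltac:(simpl; lia) ltac:(simpl; lia) ltac:(lia) I k);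
      simpl; [exact Hk|rewrite Hn; exact Hk'].
Qed.

Definition disjoint_on (be : nat -> R) (K : nat -> interval) : Prop :=
  forall i j, i <> j -> be i <> 0 -> be j <> 0 -> disjoint (K i) (K j).

Lemma disjoint_on_update be K i J : disjoint_on be K ->
  (forall j, j <> i -> be j <> 0 -> disjoint J (K j)) -> disjoint_on be (update K i J).
Proof.
  intros HK HJ j k Hjk Hj Hk. unfold update.
  destruct (Nat.eq_dec j i), (Nat.eq_dec k i); subst; try lia.
  - apply HJ; auto.
  - apply disjoint_sym, HJ; auto.
  - apply HK; auto.
Qed.

Definition sumL (f : R * interval -> R) (ps : list (R * interval)) : R :=
  fold_right (fun p acc => f p + acc) 0 ps.

Lemma sumL_abs_le_AM_GM y ps :
  sumL (fun p => Rabs (fst p) * Rabs (Isum (snd p) y)) ps <=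
  (sumL (fun p => fst p ^ 2) ps + sq_sum (map snd ps) y) / 2.
Proof.
  induction ps as [|[b K] ps IH]; [unfold sumL, sq_sum; simpl; lra|].
  assert (Rabs b * Rabs (Isum K y) <= (b ^ 2 + Isum K y ^ 2) / 2).
  { rewrite <- (pow2_abs b), <- (pow2_abs (Isum K y)).
    pose proof (pow2_ge_0 (Rabs b - Rabs (Isum K y))). nra. }
  unfold sq_sum, sumL in *. cbn [fold_right map fst snd] in *. lra.
Qed.

Fixpoint support_list (be : nat -> R) (K : nat -> interval) (N : nat) : list (R * interval) :=
  match N with
  | O => if Req_EM_T (be O) 0 then nil else (be O, K O) :: nil
  | S N' => if Req_EM_T (be N) 0 then support_list be K N'
            else (be N, K N) :: support_list be K N'
  end.

Lemma sumL_support_list (f : R -> interval -> R) be K N : (forall J, f 0 J = 0) ->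
  sumL (fun p => f (fst p) (snd p)) (support_list be K N) = sum_n (fun j => f (be j) (K j)) N.
Proof.
  intros Hf. induction N as [|N IH].
  - rewrite sum_O. simpl. destruct (Req_EM_T (be O) 0) as [E|E]; simpl.
    + rewrite E, Hf; reflexivity.
    + lra.
  - rewrite sum_Sn. simpl. change (plus ?a ?b) with (a + b).
    destruct (Req_EM_T (be (S N)) 0) as [E|E]; simpl.
    + rewrite IH, E, Hf. lra.
    + rewrite <- IH. unfold sumL. simpl. lra.
Qed.

Lemma In_support_list be K N p : In p (support_list be K N) ->
  exists j, (j <= N)%nat /\ be j <> 0 /\ p = (be j, K j).
Proof.
  induction N as [|N IH]; simpl.
  - destruct (Req_EM_T (be O) 0); simpl; [tauto|].
    intros [H|[]]. exists O; auto.
  - destruct (Req_EM_T (be (S N)) 0); simpl.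
    + intros H; destruct (IH H) as [j [? ?]]; exists j; split; [lia|auto].
    + intros [H|H]; [exists (S N); auto|].
      destruct (IH H) as [j [? ?]]; exists j; split; [lia|auto].
Qed.

Lemma support_list_pairwise_disjoint be K N :
  disjoint_on be K -> pairwise_disjoint (map snd (support_list be K N)).
Proof.
  intros HK. induction N as [|N IH]; simpl.
  - destruct (Req_EM_T (be O) 0); simpl.
    + intros i j Hi; simpl in Hi; lia.
    + apply pairwise_disjoint_cons; [simpl; tauto|]. intros i j Hi; simpl in Hi; lia.
  - destruct (Req_EM_T (be (S N)) 0); simpl; auto.
    apply pairwise_disjoint_cons; auto.
    intros J HJ. apply in_map_iff in HJ. destruct HJ as [p [Hp Hin]].
    destruct (In_support_list _ _ _ _ Hin) as [j [Hj [Hbj ->]]]. simpl in Hp; subst J.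
    apply HK; auto; lia.
Qed.

Lemma weighted_partial_sums_le be K y M :
  disjoint_on be K -> (forall l, pairwise_disjoint l -> sq_sum l y <= M) ->
  forall N, sum_n (fun j => Rabs (be j * Isum (K j) y)) N <= (sum_n (fun j => be j ^ 2) N + M) / 2.
Proof.
  intros HK Hy N.
  rewrite (sum_n_ext _ (fun j => Rabs (be j) * Rabs (Isum (K j) y))) by (intros; apply Rabs_mult).
  rewrite <- (sumL_support_list (fun b J => Rabs b * Rabs (Isum J y)) be K)
    by (intros; rewrite Rabs_R0; ring).
  rewrite <- (sumL_support_list (fun b _ => b ^ 2) be K) by (intros; simpl; ring).
  pose proof (sumL_abs_le_AM_GM y (support_list be K N)).
  pose proof (Hy _ (support_list_pairwise_disjoint be K N HK)). lra.
Qed.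

Definition weighted_sum (be : nat -> R) (K : nat -> interval) (y : nat -> R) : R :=
  Series (fun j => be j * Isum (K j) y).

Section WeightedSums.

Variables (be : nat -> R) (K : nat -> interval).
Hypothesis Hsq : forall N, sum_n (fun j => be j ^ 2) N <= 1.
Hypothesis HK : disjoint_on be K.

Lemma ex_series_abs_weighted_terms y : in_BJ y ->
  ex_series (fun j => Rabs (be j * Isum (K j) y)).
Proof.
  intros [_ Hy]. apply ex_series_of_bounded_partial_sums with ((1 + 1) / 2).
  - intros; apply Rabs_pos.
  - intros N. pose proof (weighted_partial_sums_le be K y 1 HK Hy N). specialize (Hsq N). lra.
Qed.

Lemma Rabs_weighted_sum_le_1 y : in_BJ y -> Rabs (weighted_sum be K y) <= 1.
Proof.
  intros Hy. pose proof (ex_series_abs_weighted_terms y Hy) as Hex.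
  eapply Rle_trans; [apply Series_Rabs; exact Hex|].
  apply (series_le_of_partial_sums_le _ _ _ (Series_correct _ Hex)).
  intros N. pose proof (weighted_partial_sums_le be K y 1 HK (proj2 Hy) N).
  specialize (Hsq N). lra.
Qed.

Lemma weighted_sum_update i J G y : in_BJ y ->
  Isum J y = Isum (K i) y + Isum G y ->
  weighted_sum be (update K i J) y = weighted_sum be K y + be i * Isum G y.
Proof.
  intros Hy HJ. unfold weighted_sum.
  rewrite <- (Series_plus_delta _ i (be i * Isum G y))
    by exact (ex_series_Rabs _ (ex_series_abs_weighted_terms y Hy)).
  apply Series_ext. intros j. unfold update, delta.
  destruct (Nat.eq_dec j i) as [->|]; [rewrite HJ|]; ring.
Qed.

End WeightedSums.

Lemma in_BJdual_shift be K i J G :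
  (forall N, sum_n (fun j => be j ^ 2) N <= 1) ->
  disjoint_on be K -> disjoint_on be (update K i J) ->
  (forall y, ex_series y -> Isum J y = Isum (K i) y + Isum G y) ->
  linear_on_J (weighted_sum be K) -> linear_on_J (Isum G) ->
  in_BJdual (fun y => weighted_sum be K y + be i * Isum G y).
Proof.
  intros Hsq HK HJ HIsum HlinK HlinG. split.
  - intros a b y z Hy Hz. rewrite HlinK, HlinG by auto. ring.
  - intros y Hy. rewrite <- (weighted_sum_update be K Hsq HK i J G y Hy (HIsum y (proj1 Hy))).
    exact (Rabs_weighted_sum_le_1 be _ Hsq HJ y Hy).
Qed.

Definition unit_vector (c : nat) : nat -> R := delta c 1.

Lemma Isum_unit_vector K c :
  (inI K c -> Isum K (unit_vector c) = 1) /\ (~ inI K c -> Isum K (unit_vector c) = 0).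
Proof.
  unfold Isum, unit_vector. destruct (hi K) as [b|] eqn:Hb.
  - pose proof (hi_ok K b Hb). rewrite sum_n_m_delta by lia.
    split; intros Hc.
    + destruct Hc as [H1 H2]. specialize (H2 b Hb).
      destruct (Nat.leb_spec (lo K) c); destruct (Nat.leb_spec c b); simpl; lia || reflexivity.
    + destruct (Nat.leb_spec (lo K) c); destruct (Nat.leb_spec c b); simpl; try reflexivity.
      exfalso; apply Hc; split; [lia|]. intros b' E. rewrite Hb in E. injection E; lia.
  - split; intros Hc.
    + destruct Hc as [H1 _].
      rewrite (Series_ext _ (delta (c - lo K) 1)).
      * apply is_series_unique, is_series_delta.
      * intros k. unfold delta.
        destruct (Nat.eq_dec (lo K + k) c), (Nat.eq_dec k (c - lo K)); lia || reflexivity.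
    + assert (Hc' : (c < lo K)%nat).
      { destruct (Nat.lt_ge_cases c (lo K)); auto.
        exfalso; apply Hc; split; auto. intros b' E. rewrite Hb in E. discriminate. }
      rewrite (Series_ext _ (delta 0 0)).
      * apply is_series_unique, is_series_delta.
      * intros k. unfold delta.
        destruct (Nat.eq_dec (lo K + k) c), (Nat.eq_dec k 0); lia || reflexivity.
Qed.

Lemma sq_sum_unit_vector_out l c : (forall K, In K l -> ~ inI K c) -> sq_sum l (unit_vector c) = 0.
Proof.
  induction l as [|K l IH]; intros Hout; [reflexivity|].
  unfold sq_sum; cbn [fold_right]. fold (sq_sum l (unit_vector c)).
  rewrite IH by (intros; apply Hout; simpl; auto).
  rewrite (proj2 (Isum_unit_vector K c)) by (apply Hout; simpl; auto). ring.
Qed.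

Lemma sq_sum_unit_vector_le_1 l c : pairwise_disjoint l -> sq_sum l (unit_vector c) <= 1.
Proof.
  induction l as [|K l IH]; intros Hl; [unfold sq_sum; simpl; lra|].
  destruct (pairwise_disjoint_cons_inv _ _ Hl) as [Hl' HK].
  unfold sq_sum; cbn [fold_right]. fold (sq_sum l (unit_vector c)).
  destruct (classic (inI K c)) as [Hc|Hc].
  - rewrite sq_sum_unit_vector_out by (intros J HJ; exact (HK J HJ c Hc)).
    rewrite (proj1 (Isum_unit_vector K c) Hc). lra.
  - rewrite (proj2 (Isum_unit_vector K c) Hc). specialize (IH Hl'). lra.
Qed.

Lemma unit_vector_inJ c : inJ (unit_vector c).
Proof.
  split.
  - exists 1; apply is_series_delta.
  - exists 1; intros; apply sq_sum_unit_vector_le_1; auto.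
Qed.

Definition ordered_on (be : nat -> R) (K : nat -> interval) : Prop :=
  forall i j, (i < j)%nat -> be j <> 0 -> before (K i) (K j).

Lemma interval_family_before F I i j : interval_family F I ->
  (i < j)%nat -> inF F j -> before (I i) (I j).
Proof.
  intros HF Hij Hj. induction j as [|j IH]; [lia|].
  assert (HjF : inF F j) by (destruct F; simpl in *; auto; lia).
  destruct (Nat.eq_dec i j) as [->|Hne].
  - exact (HF j HjF Hj).
  - exact (before_trans _ _ _ (IH ltac:(lia) HjF) (HF j HjF Hj)).
Qed.

Lemma interval_family_ordered_on F alpha Ifam :
  interval_family F Ifam -> ordered_on (xseq F alpha) Ifam.
Proof.
  intros HF i j Hij Hj. apply (interval_family_before F); auto.
  unfold xseq, inFb in Hj. destruct F as [k|]; simpl; auto.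
  destruct (Nat.ltb_spec j k); [assumption|lra].
Qed.

Lemma ordered_on_lo_le be K i j : ordered_on be K -> (i <= j)%nat -> be j <> 0 ->
  (lo (K i) <= lo (K j))%nat.
Proof.
  intros Hord Hij Hj. destruct (Nat.eq_dec i j) as [->|]; [lia|].
  pose proof (before_lo_lt _ _ (Hord i j ltac:(lia) Hj)). lia.
Qed.

Lemma ordered_on_disjoint_on be K : ordered_on be K -> disjoint_on be K.
Proof.
  intros Hord i j Hij Hi Hj. destruct (Nat.lt_gt_cases i j) as [[H|H] _]; auto.
  - exact (before_disjoint _ _ (Hord i j H Hj)).
  - exact (disjoint_sym _ _ (before_disjoint _ _ (Hord j i H Hi))).
Qed.

Lemma greatest_below (P : nat -> Prop) m : (exists n, (n < m)%nat /\ P n) ->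
  exists n, (n < m)%nat /\ P n /\ forall i, (n < i < m)%nat -> ~ P i.
Proof.
  induction m as [|m IH]; intros [n [Hn HPn]]; [lia|].
  destruct (classic (P m)) as [Hm|Hm].
  - exists m; repeat split; auto; lia.
  - destruct IH as [k [Hk [HPk Hmax]]].
    + exists n; split; auto. destruct (Nat.eq_dec n m); [subst; contradiction|lia].
    + exists k; split; [lia|split; [exact HPk|]]. intros i Hi.
      destruct (Nat.eq_dec i m); [subst; auto|]. apply Hmax; lia.
Qed.

Lemma support_gap be K : ordered_on be K -> (exists j, be j <> 0) ->
  ~ is_interval (supp_union be K) ->
  exists n m hn, (n < m)%nat /\ be n <> 0 /\ be m <> 0 /\
    (forall j, (n < j < m)%nat -> be j = 0) /\
    hi (K n) = Some hn /\ (S hn < lo (K m))%nat.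
Proof.
  intros Hord [j0 Hj0] Hnot.
  assert (Hgap : exists a b c, supp_union be K a /\ supp_union be K b /\
            (a <= c <= b)%nat /\ ~ supp_union be K c).
  { apply NNPP; intros Hno. apply Hnot. split.
    - exists (lo (K j0)), j0. split; [exact Hj0|apply inI_lo].
    - intros a b c Ha Hb Hac Hcb. apply NNPP; intros Hc. apply Hno. exists a, b, c; auto. }
  destruct Hgap as (a & b & c & [na [Hna Ha]] & [nb [Hnb Hb]] & Hc & Hcout).
  assert (Hout : forall j, be j <> 0 -> ~ inI (K j) c)
    by (intros j Hj Hin; apply Hcout; exists j; split; auto).
  assert (Hnb_lo : (c < lo (K nb))%nat).
  { destruct (Nat.lt_ge_cases c (lo (K nb))) as [H|H]; auto.
    exfalso. apply (Hout nb Hnb), (inI_between _ c b); auto; lia. }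
  destruct (dec_inh_nat_subset_has_unique_least_element
              (fun j => be j <> 0 /\ (c < lo (K j))%nat) (fun j => classic _)
              (ex_intro _ nb (conj Hnb Hnb_lo)))
    as [m [[[Hm Hm_lo] Hmin] _]].
  assert (Hna_m : (na < m)%nat).
  { destruct (Nat.lt_ge_cases na m) as [H|H]; auto.
    pose proof (ordered_on_lo_le be K m na Hord H Hna). destruct Ha. lia. }
  destruct (greatest_below (fun j => be j <> 0) m) as [n [Hnm [Hn Hmax]]]; [eauto|].
  destruct (before_hi _ _ (Hord n m Hnm Hm)) as [hn [Hhn Hhn_lt]].
  assert (Hn_lo : (lo (K n) <= c)%nat).
  { destruct (Nat.le_gt_cases (lo (K n)) c) as [H|H]; auto.
    pose proof (Hmin n (conj Hn H)). lia. }
  assert (Hhn_c : (hn < c)%nat).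
  { destruct (Nat.lt_ge_cases hn c) as [H|H]; auto. exfalso.
    apply (Hout n Hn). split; auto. intros b' E. rewrite Hhn in E. injection E; lia. }
  exists n, m, hn. repeat split; auto; [|lia].
  intros j Hj. apply NNPP; intros Hbj. exact (Hmax j Hj Hbj).
Qed.

Lemma xstar_weighted_sum F alpha Ifam y :
  xstar F alpha Ifam y = weighted_sum (xseq F alpha) Ifam y.
Proof.
  unfold xstar, weighted_sum, xseq. apply Series_ext. intros j. destruct (inFb F j); ring.
Qed.

(** * Consecutive support indices around a gap *)

Section ConsecutiveSupport.

Variables (x : nat -> R) (n m : nat).
Hypotheses (Hnm : (n < m)%nat) (Hn : x n <> 0) (Hm : x m <> 0)
  (Hbetween : forall j, (n < j < m)%nat -> x j = 0).

Lemma consecutive_support_opposite_signs :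
  is_series (fun j => x j ^ 2) 1 -> in_BJ x -> x n * x m < 0.
Proof.
  intros Hser [_ Hx].
  (* merge the coordinates n and m into the block [n, m]; all others stay singletons *)
  set (beta := fun j => if Nat.eq_dec j n then x n + x m
                        else if Nat.eq_dec j m then 0 else x j).
  set (blocks := fun j => if Nat.eq_dec j n then fin_interval n m else fin_interval j j).
  assert (Hout : forall j, j <> n -> beta j <> 0 -> (j < n \/ m < j)%nat).
  { intros j Hjn Hj. unfold beta in Hj.
    destruct (Nat.eq_dec j n); [contradiction|]. destruct (Nat.eq_dec j m); [lra|].
    destruct (Nat.lt_ge_cases j n); [auto|]. destruct (Nat.lt_ge_cases m j); [auto|].
    exfalso; apply Hj, Hbetween; lia. }
  assert (Hdisj : disjoint_on beta blocks).
  { intros i j Hij Hi Hj k Hki Hkj. unfold blocks in Hki, Hkj.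
    destruct (Nat.eq_dec i n) as [->|Hin]; destruct (Nat.eq_dec j n) as [->|Hjn]; try lia;
      apply inI_fin_interval in Hki; try lia; apply inI_fin_interval in Hkj; try lia.
    - pose proof (Hout j Hjn Hj). lia.
    - pose proof (Hout i Hin Hi). lia. }
  assert (Hterm : forall j, Rabs (beta j * Isum (blocks j) x) = beta j ^ 2).
  { intros j. rewrite <- (Rabs_pos_eq (beta j ^ 2)) by apply pow2_ge_0. f_equal.
    unfold beta, blocks. destruct (Nat.eq_dec j n) as [->|Hjn].
    - rewrite Isum_fin_interval, sum_n_m_endpoints by (auto; lia). ring.
    - rewrite Isum_fin_interval, sum_n_n by lia. destruct (Nat.eq_dec j m); ring. }
  assert (Hbeta_sq : forall j, beta j ^ 2 =
            x j ^ 2 + delta n (2 * (x n * x m) + x m ^ 2) j + delta m (- x m ^ 2) j).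
  { intros j. unfold beta, delta.
    destruct (Nat.eq_dec j n), (Nat.eq_dec j m); try lia; subst; ring. }
  assert (Hsum : forall N, (m <= N)%nat ->
            sum_n (fun j => beta j ^ 2) N = sum_n (fun j => x j ^ 2) N + 2 * (x n * x m)).
  { intros N HN.
    rewrite (sum_n_ext _ _ N Hbeta_sq), !(sum_n_plus (G:=R_AbelianMonoid)), !sum_n_delta.
    repeat change (plus ?a ?b) with (a + b).
    destruct (Nat.leb_spec n N), (Nat.leb_spec m N); try lia.
    rewrite Rplus_assoc. f_equal. ring. }
  assert (Hpartial : forall N, (m <= N)%nat -> sum_n (fun j => x j ^ 2) N + 2 * (x n * x m) <= 1).
  { intros N HN. pose proof (weighted_partial_sums_le beta blocks x 1 Hdisj Hx N) as H.
    rewrite (sum_n_ext _ _ N Hterm), (Hsum N HN) in H. lra. }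
  assert (Hlim : Rbar_le (1 + 2 * (x n * x m)) 1).
  { apply (is_lim_seq_le_loc (fun N => sum_n (fun j => x j ^ 2) N + 2 * (x n * x m))
             (fun _ => 1)).
    - exists m. exact Hpartial.
    - apply is_lim_seq_plus'; [exact Hser|apply is_lim_seq_const].
    - apply is_lim_seq_const. }
  simpl in Hlim. pose proof (Rmult_integral_contrapositive_currified _ _ Hn Hm). lra.
Qed.

Variables (K : nat -> interval) (hn : nat).
Hypotheses (Hord : ordered_on x K) (Hhn : hi (K n) = Some hn) (Hgap : (S hn < lo (K m))%nat).

Lemma disjoint_on_extend_right :
  disjoint_on x (update K n (fin_interval (lo (K n)) (lo (K m) - 1))).
Proof.
  apply disjoint_on_update; [exact (ordered_on_disjoint_on x K Hord)|].
  intros j Hjn Hj. pose proof (hi_ok _ _ Hhn).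
  destruct (proj1 (Nat.lt_gt_cases j n) Hjn) as [Hlt|Hgt].
  - apply disjoint_sym, before_disjoint. exact (Hord j n Hlt Hn).
  - apply before_disjoint.
    assert (Hmj : (m <= j)%nat).
    { destruct (Nat.lt_ge_cases j m); [exfalso; apply Hj, Hbetween; lia|auto]. }
    pose proof (ordered_on_lo_le x K m j Hord Hmj Hj).
    unfold before; cbn [hi lo fin_interval]. lia.
Qed.

Lemma disjoint_on_extend_left : disjoint_on x (update K m (extend_left (S hn) (K m))).
Proof.
  apply disjoint_on_update; [exact (ordered_on_disjoint_on x K Hord)|].
  intros j Hjm Hj.
  destruct (proj1 (Nat.lt_gt_cases j m) Hjm) as [Hlt|Hgt].
  - apply disjoint_sym, before_disjoint.
    assert (Hjn : (j <= n)%nat).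
    { destruct (Nat.le_gt_cases j n); [auto|exfalso; apply Hj, Hbetween; lia]. }
    unfold before, extend_left; cbn [lo]. rewrite Nat.min_l by lia.
    destruct (Nat.eq_dec j n) as [->|Hne].
    + rewrite Hhn. lia.
    + destruct (before_hi _ _ (Hord j n ltac:(lia) Hn)) as [b [Hb Hb_lt]].
      pose proof (hi_ok _ _ Hhn). rewrite Hb. lia.
  - apply before_disjoint. exact (Hord m j Hgt Hj).
Qed.

Lemma weighted_sum_not_extreme f :
  (forall N, sum_n (fun j => x j ^ 2) N <= 1) -> x n * x m < 0 ->
  (forall y, f y = weighted_sum x K y) -> ~ extreme_BJdual f.
Proof.
  intros Hsq Hsign Hf [[Hlin _] Hext].
  set (G := fin_interval (S hn) (lo (K m) - 1)).
  assert (HlinK : linear_on_J (weighted_sum x K)).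
  { intros a b y z Hy Hz. rewrite <- !Hf. apply Hlin; auto. }
  pose proof (ordered_on_disjoint_on x K Hord) as HK.
  assert (Hg1 : in_BJdual (fun y => weighted_sum x K y + x n * Isum G y)).
  { apply (in_BJdual_shift x K n (fin_interval (lo (K n)) (lo (K m) - 1)) G Hsq HK
             disjoint_on_extend_right); auto.
    - intros y _. apply Isum_fin_interval_split; auto; lia.
    - apply linear_on_J_Isum_fin_interval. }
  assert (Hg2 : in_BJdual (fun y => weighted_sum x K y + x m * Isum G y)).
  { apply (in_BJdual_shift x K m (extend_left (S hn) (K m)) G Hsq HK
             disjoint_on_extend_left); auto.
    - intros y Hy. unfold G. rewrite Isum_extend_left, Isum_fin_interval by (auto; lia). ring.
    - apply linear_on_J_Isum_fin_interval. }
  assert (Hm2 : 0 < x m ^ 2) by (rewrite <- Rsqr_pow2; apply Rsqr_pos_lt; exact Hm).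
  assert (HD : 0 < x m ^ 2 - x n * x m) by lra.
  (* the weight making the G^* terms cancel: t x_n + (1 - t) x_m = 0 *)
  set (t := x m ^ 2 / (x m ^ 2 - x n * x m)).
  assert (Ht : 0 < t < 1).
  { unfold t. split; [apply Rdiv_lt_0_compat; lra|apply (Rdiv_lt_1 _ _ HD); lra]. }
  assert (Hcomb : forall y, inJ y -> f y =
            t * (weighted_sum x K y + x n * Isum G y)
            + (1 - t) * (weighted_sum x K y + x m * Isum G y)).
  { intros y _. rewrite Hf. unfold t. field. lra. }
  pose proof (Hext _ _ t Hg1 Hg2 Ht Hcomb (unit_vector (S hn)) (unit_vector_inJ _)) as Hsame.
  cbv beta in Hsame.
  rewrite (proj1 (Isum_unit_vector G (S hn))) in Hsame by (apply inI_fin_interval; lia).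
  nra.
Qed.

End ConsecutiveSupport.

Theorem proposition5p4 (F : option nat) (alpha : nat -> R) (Ifam : nat -> interval) :
  index_set_ok F ->
  is_series (fun n => (xseq F alpha n) ^ 2) 1 ->
  interval_family F Ifam ->
  extreme_BJ (xseq F alpha) ->
  ~ is_interval (supp_union (xseq F alpha) Ifam) ->
  ~ extreme_BJdual (xstar F alpha Ifam).
Proof.
  intros _ Hser Hfam [Hx _] Hnot.
  pose proof (interval_family_ordered_on F alpha Ifam Hfam) as Hord.
  destruct (support_gap _ _ Hord (exists_nonzero_of_is_series_sq _ Hser) Hnot)
    as (n & m & hn & Hnm & Hn & Hm & Hbetween & Hhn & Hgap).
  apply (weighted_sum_not_extreme _ n m Hnm Hn Hm Hbetween Ifam hn Hord Hhn Hgap).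
  - intros N. apply (partial_sum_le_series _ _ N Hser). intros; apply pow2_ge_0.
  - exact (consecutive_support_opposite_signs _ n m Hnm Hn Hm Hbetween Hser Hx).
  - apply xstar_weighted_sum.
Qed.
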